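(* Let $K\ge 1$ and $N_1,\ldots,N_K\ge 1$ be integers, let $T\ge 1$, and let $\Delta_N=\{\boldsymbol u\in\mathbb R_+^N:\sum_{i=1}^N u_i=1\}$. Let $\ell_t:\Delta_{N_1}\times\cdots\times\Delta_{N_K}\to\mathbb R$, $t\ge 1$, be differentiable and jointly convex loss functions. Assume that for every $k\in\{1,\ldots,K\}$ there is $G^{(k)}>0$ with $$\max_{1\le t\le T}\ \sup_{\boldsymbol u^{(1)},\ldots,\boldsymbol u^{(K)}}\ \max_{1\le i\le N_k}\Big|\partial_{u^{(k)}_i}\ell_t\big(\boldsymbol u^{(1)},\ldots,\boldsymbol u^{(K)}\big)\Big|\le G^{(k)}.$$ Then the Multi-variable Exponentiated Gradient algorithm (described in the context) run with $\eta^{(k)}=\sqrt{2\log(N_k)/T}\,/G^{(k)}$ for $k=1,\ldots,K$ satisfies $$\sum_{t=1}^T \ell_t\big(\hat{\boldsymbol u}^{(1)}_t,\ldots,\hat{\boldsymbol u}^{(K)}_t\big)-\min_{(\boldsymbol u^{(1)},\ldots,\boldsymbol u^{(K)})\in\Delta_{N_1}\times\cdots\times\Delta_{N_K}}\sum_{t=1}^T\ell_t\big(\boldsymbol u^{(1)},\ldots,\boldsymbol u^{(K)}\big)\le\sqrt{2T}\sum_{k=1}^K G^{(k)}\sqrt{\log N_k}.$$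
   Context: Multi-variable Exponentiated Gradient algorithm with parameters $\eta^{(1)},\ldots,\eta^{(K)}>0$ (the losses may be chosen adversarially, $\ell_t$ being revealed after the output of round $t$): initialize $\hat{\boldsymbol u}^{(k)}_1=(1/N_k,\ldots,1/N_k)\in\Delta_{N_k}$ for all $k$. At each round $t=1,2,\ldots$, output $(\hat{\boldsymbol u}^{(1)}_t,\ldots,\hat{\boldsymbol u}^{(K)}_t)$, observe $\ell_t$, and set for each $k$ and $i\in\{1,\ldots,N_k\}$ $$\hat u^{(k)}_{t+1,i}=\frac{\exp\big(-\eta^{(k)}\sum_{s=1}^t\partial_{u^{(k)}_i}\ell_s(\hat{\boldsymbol u}^{(1)}_s,\ldots,\hat{\boldsymbol u}^{(K)}_s)\big)}{\sum_{i'=1}^{N_k}\exp\big(-\eta^{(k)}\sum_{s=1}^t\partial_{u^{(k)}_{i'}}\ell_s(\hat{\boldsymbol u}^{(1)}_s,\ldots,\hat{\boldsymbol u}^{(K)}_s)\big)},$$ where $\partial_{u^{(k)}_i}\ell_s$ is the partial derivative of $\ell_s$ with respect to the $i$-th coordinate of the $k$-th block variable. *)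

From HB Require Import structures.
From mathcomp Require Import all_boot all_order all_algebra.
From mathcomp Require Import all_classical all_reals all_analysis.
Set Implicit Arguments. Unset Strict Implicit. Unset Printing Implicit Defensive.
Import Order.TTheory GRing.Theory Num.Theory.
Import numFieldNormedType.Exports.
Local Open Scope ring_scope.

(* A point (u^(1),...,u^(K)) of R^{N_1} x ... x R^{N_K} is represented as a
   single row vector of length N_1 + ... + N_K; the i-th coordinate of the
   k-th block is the coordinate  idx k i  (MathComp's tagnat.Rank bijection
   between {k : 'I_K & 'I_(N k)} and 'I_(\sum_k N k)). *)
Definition dimN (K : nat) (N : 'I_K -> nat) : nat := (\sum_(k < K) N k)%N.

Definition idx (K : nat) (N : 'I_K -> nat) (k : 'I_K) (i : 'I_(N k))
  : 'I_(dimN N) := @tagnat.Rank K N k i.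

Definition in_simplex_prod (R : realType) (K : nat) (N : 'I_K -> nat)
  (x : 'rV[R]_(dimN N)) : Prop :=
  forall k : 'I_K, (forall i : 'I_(N k), 0 <= x ord0 (idx i)) /\
                   \sum_(i < N k) x ord0 (idx i) = 1.

Definition partial (R : realType) (n : nat) (f : 'rV[R]_n -> R)
  (x : 'rV[R]_n) (j : 'I_n) : R := 'D_(delta_mx ord0 j) f x.

Definition eg_weights (R : realType) (K : nat) (N : 'I_K -> nat)
  (eta : 'I_K -> R) (L : 'rV[R]_(dimN N)) : 'rV[R]_(dimN N) :=
  \row_(j < dimN N)
     (let k := @tagnat.sig1 K N j in
      expR (- eta k * L ord0 j) /
      \sum_(i < N k) expR (- eta k * L ord0 (idx i))).

Fixpoint cum_grad (R : realType) (K : nat) (N : 'I_K -> nat)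
  (eta : 'I_K -> R) (l : nat -> 'rV[R]_(dimN N) -> R) (t : nat)
  : 'rV[R]_(dimN N) :=
  match t with
  | 0 => 0
  | s.+1 => cum_grad eta l s +
            \row_(j < dimN N) partial (l s.+1) (eg_weights eta (cum_grad eta l s)) j
  end.

Definition eg_output (R : realType) (K : nat) (N : 'I_K -> nat)
  (eta : 'I_K -> R) (l : nat -> 'rV[R]_(dimN N) -> R) (t : nat)
  : 'rV[R]_(dimN N) := eg_weights eta (cum_grad eta l t.-1).

(* Convexity bounds the regret against u by the linearized regret
   sum_t <grad l_t(x_t), x_t - u>, which splits into one linearized regret per
   block; on block k the algorithm is exponentially weighted averaging with the
   partial derivatives as losses.  For the potential Z_t = sum_i exp(-eta L_t,i)
   of the cumulated losses, Hoeffding's lemma gives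
   Z_t <= Z_(t-1) exp(-eta <w_t, g_t> + eta^2 G^2 / 2), while Z_T >= exp(-eta L_T,i)
   for every expert i; comparing the two bounds the block regret by
   ln N / eta + T eta G^2 / 2, which the chosen eta makes G sqrt(2 T ln N). *)

From HB Require Import structures.
From mathcomp Require Import all_boot all_order all_algebra.
From mathcomp Require Import all_classical all_reals all_analysis.
From mathcomp Require Import ring lra.
Set Implicit Arguments. Unset Strict Implicit. Unset Printing Implicit Defensive.
Import Order.TTheory GRing.Theory Num.Theory.
Import numFieldNormedType.Exports.
Local Open Scope ring_scope.

Section HoeffdingMix.
Variables (R : realType) (p : R).
Hypothesis p01 : 0 <= p <= 1.

Let mix (y : R) := 1 - p + p * expR y.

Let mix_gt0 (y : R) : 0 < mix y.
Proof.
case/andP: p01 => p0 p1; rewrite /mix.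
have := mulr_ge0 p0 (expR_ge0 y); have [->|p_lt1] := eqVneq p 1.
  by rewrite subrr add0r mul1r expR_gt0.
have : p < 1 by rewrite lt_neqAle p_lt1 p1.
lra.
Qed.

Let is_derive_mix (x : R) : is_derive x 1 mix (p * expR x).
Proof.
have -> : mix = cst (1 - p) + p *: (expR : R -> R) by apply/funext.
by rewrite -[p * _]add0r; apply: is_deriveD; apply: is_deriveZ.
Qed.

Let ratio : R -> R :=
  (p *: (expR : R -> R)) * (fun y => (mix y)^-1) - 4^-1 *: (@id R).

(* [ratio' = q (1 - q) - 1/4 <= 0] with [q = p e^x / mix x]. *)
Let ratio_le (h : R) : 0 <= h -> ratio h <= p.
Proof.
move=> h0.
have Dratio (x : R) : is_derive x 1 ratio
    (p * expR x * (- (mix x) ^- 2 * (p * expR x)) + (mix x)^-1 * (p * expR x) - 4^-1).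
  have hV := is_deriveV (lt0r_neq0 (mix_gt0 x)) (is_derive_mix x).
  have hE : is_derive x 1 (p *: (expR : R -> R)) (p * expR x) by exact: is_deriveZ.
  have hI : is_derive x 1 (4^-1 *: (@id R)) (4^-1 * 1) by exact: is_deriveZ.
  by have := is_deriveB (is_deriveM hE hV) hI; rewrite mulr1.
have ratio0 : ratio 0 = p.
  change (p * expR 0 * (mix 0)^-1 - 4^-1 * 0 = p).
  by rewrite /mix expR0 mulr1 subrK invr1 !mulr1 mulr0 subr0.
rewrite -ratio0; apply: (@ler0_derive1_nincry R ratio 0) => //.
- move=> x _; rewrite derive1E (derive_val (is_derive := Dratio x)) -exprVn.
  move: (mix x)^-1 (p * expR x) => m e.
  have -> : e * (- m ^+ 2 * e) + m * e - 4^-1 = - (m * e - 2^-1) ^+ 2 by field.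
  by rewrite oppr_le0 sqr_ge0.
- by apply: derivable_within_continuous => x _; case: (Dratio x).
Qed.

(* [ln (mix h) - p h - h^2/8] vanishes at 0 and has derivative [ratio h - p]. *)
Lemma hoeffding_mix (h : R) : 0 <= h ->
  1 - p + p * expR h <= expR (p * h + 8^-1 * h ^+ 2).
Proof.
pose F : R -> R := @ln R \o mix - p *: (@id R) - 8^-1 *: (@id R) ^+ 2.
have DF (x : R) : is_derive x 1 F
    ((mix x)^-1 * (p * expR x) - p * 1 - 8^-1 * (2%:R * x ^+ 1 *: 1)).
  have hl := is_derive1_comp (is_derive1_ln (mix_gt0 x)) (is_derive_mix x).
  have hp : is_derive x 1 (p *: (@id R)) (p * 1) by exact: is_deriveZ.
  have hX : is_derive x 1 (8^-1 *: (@id R) ^+ 2) (8^-1 * (2%:R * x ^+ 1 *: 1)).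
    exact: is_deriveZ.
  exact: is_deriveB (is_deriveB hl hp) hX.
have F0 : F 0 = 0.
  change (ln (mix 0) - p * 0 - 8^-1 * (0 ^+ 2) = 0).
  by rewrite /mix expR0 mulr1 subrK ln1 expr0n /= !mulr0 !subr0.
move=> h0; have : F h <= 0.
  rewrite -F0; apply: (@ler0_derive1_nincry R F 0) => //.
  - move=> x; rewrite in_itv /= andbT => x0.
    rewrite derive1E (derive_val (is_derive := DF x)).
    have := ratio_le (ltW x0).
    change (p * expR x * (mix x)^-1 - 4^-1 * x <= p ->
      (mix x)^-1 * (p * expR x) - p * 1 - 8^-1 * (2%:R * x ^+ 1 * 1) <= 0).
    have -> : 8^-1 * (2%:R * x ^+ 1 * 1) = 4^-1 * x :> R by field.
    lra.
  - by apply: derivable_within_continuous => x _; case: (DF x).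
change (ln (mix h) - p * h - 8^-1 * h ^+ 2 <= 0 -> mix h <= expR (p * h + 8^-1 * h ^+ 2)).
move=> Fh; rewrite -[mix h](lnK (mix_gt0 h)) ler_expR; lra.
Qed.

End HoeffdingMix.

Section Hoeffding.
Variable R : realType.

Lemma expR_chord (t a b : R) : 0 <= t -> t <= 1 ->
  expR (t * a + (1 - t) * b) <= t * expR a + (1 - t) * expR b.
Proof. by move=> t0 t1; have := convex_expR (Itv01 t0 t1) a b; rewrite !convRE. Qed.

Lemma expR_two_point (q c : R) : 0 <= q <= 1 -> 0 <= c ->
  q * expR c + (1 - q) * expR (- c) <= expR ((2 * q - 1) * c + c ^+ 2 / 2).
Proof.
move=> q01 c0.
have c2 : 0 <= 2 * c by rewrite mulr_ge0.
have -> : q * expR c + (1 - q) * expR (- c) =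
    expR (- c) * (1 - q + q * expR (2 * c)).
  rewrite mulr_natl mulr2n expRD.
  have cK : expR (- c) * expR c = 1 by rewrite -expRD addNr expR0.
  move: cK; set A := expR c; set B := expR (- c) => cK.
  have -> : B * (1 - q + q * (A * A)) = B * (1 - q) + q * A * (B * A) by ring.
  by rewrite cK; ring.
apply: (le_trans (ler_wpM2l (expR_ge0 _) (hoeffding_mix q01 c2))).
by rewrite -expRD ler_expR; lra.
Qed.

Lemma hoeffding_lemma n (w y : 'I_n -> R) (c : R) :
  (forall i, 0 <= w i) -> \sum_i w i = 1 -> 0 < c -> (forall i, `|y i| <= c) ->
  \sum_i w i * expR (y i) <= expR (\sum_i w i * y i + c ^+ 2 / 2).
Proof.
move=> w0 w1 c0 yc.
pose t i := (c + y i) / (2 * c).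
have t01 i : 0 <= t i <= 1.
  have := yc i; rewrite ler_norml => /andP[yl yu].
  by rewrite /t divr_ge0 ?ler_pdivrMr ?mul1r /=; lra.
have yE i : y i = t i * c + (1 - t i) * (- c) by rewrite /t; field; lra.
pose q := \sum_i w i * t i.
have q01 : 0 <= q <= 1.
  rewrite sumr_ge0 /= => [|i _]; last by rewrite mulr_ge0 //; case/andP: (t01 i).
  rewrite -w1; apply: ler_sum => i _; rewrite -[leRHS]mulr1 ler_wpM2l //.
  by case/andP: (t01 i).
have qE : (2 * q - 1) * c = \sum_i w i * y i.
  have -> : \sum_i w i * y i = \sum_i (2 * (w i * t i) - w i) * c.
    by apply: eq_bigr => i _; rewrite /t; field; lra.
  by rewrite /q -[X in (_ - X) * _ = _]w1 mulr_sumr -sumrB mulr_suml.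
apply: (@le_trans _ _ (q * expR c + (1 - q) * expR (- c))).
  rewrite /q -[in 1 - _]w1 -sumrB mulr_suml mulr_suml -big_split /=.
  apply: ler_sum => i _; rewrite [in leLHS]yE.
  have /andP[t0 t1] := t01 i.
  apply: (le_trans (ler_wpM2l (w0 i) (expR_chord c (- c) t0 t1))).
  by lra.
by rewrite -qE; apply: expR_two_point => //; rewrite ltW.
Qed.

End Hoeffding.

Section ConvexGradient.
Variables (R : realType) (n : nat).

Lemma derive_le_of_secant (f : 'rV[R]_n -> R) (x v : 'rV[R]_n) (c : R) :
  derivable f x v ->
  (forall h : R, 0 < h -> h <= 1 -> f (h *: v + x) <= f x + h * c) ->
  'D_v f x <= c.
Proof.
move=> dfv secant; apply: (cvgr_to_le (cvg_dnbhs_at_right dfv)).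
near=> h.
have h0 : 0 < h by near: h; exact: nbhs_right_gt.
have h1 : h <= 1 by near: h; apply: nbhs_right_ltW; exact: ltr01.
rewrite /= -[leRHS](mulKf (lt0r_neq0 h0)) /GRing.scale /=.
by rewrite ler_pM2l ?invr_gt0 // lerBlDl; exact: secant.
Unshelve. all: by end_near. Qed.

Lemma derive_partial_sum (f : 'rV[R]_n -> R) (x v : 'rV[R]_n) :
  differentiable f x -> 'D_v f x = \sum_j v ord0 j * partial f x j.
Proof.
move=> df; rewrite deriveE // {1}(row_sum_delta v) linear_sum.
by apply: eq_bigr => j _; rewrite linearZ /= /partial deriveE.
Qed.

Lemma convex_partial_le (f : 'rV[R]_n -> R) (x u : 'rV[R]_n) :
  differentiable f x ->
  (forall lam : R, 0 <= lam <= 1 ->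
     f (lam *: u + (1 - lam) *: x) <= lam * f u + (1 - lam) * f x) ->
  f x - f u <= \sum_j (x ord0 j - u ord0 j) * partial f x j.
Proof.
move=> df convf.
have : 'D_(u - x) f x <= f u - f x.
  apply: derive_le_of_secant; first exact: diff_derivable.
  move=> h h0 h1; have -> : h *: (u - x) + x = h *: u + (1 - h) *: x.
    by rewrite scalerBr scalerBl scale1r [x - _]addrC addrA.
  by have := convf h; rewrite h1 ltW //=; lra.
rewrite derive_partial_sum //.
have -> : \sum_j (x ord0 j - u ord0 j) * partial f x j =
    - \sum_j (u - x) ord0 j * partial f x j.
  by rewrite -sumrN; apply: eq_bigr => j _; rewrite !mxE; ring.
lra.
Qed.

End ConvexGradient.

Section ExponentialWeights.
Variables (R : realType) (m : nat) (g : nat -> 'I_m -> R) (eta : R).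

Definition cumloss (t : nat) (i : 'I_m) : R := \sum_(1 <= s < t.+1) g s i.
Definition potential (t : nat) : R := \sum_i expR (- eta * cumloss t i).
Definition ewa_weight (t : nat) (i : 'I_m) : R :=
  expR (- eta * cumloss t.-1 i) / potential t.-1.

Lemma cumloss0 i : cumloss 0 i = 0.
Proof. by rewrite /cumloss big_geq. Qed.

Lemma cumlossS t i : cumloss t.+1 i = cumloss t i + g t.+1 i.
Proof. by rewrite /cumloss big_nat_recr. Qed.

Lemma potential0 : potential 0 = m%:R.
Proof.
rewrite /potential; under eq_bigr do rewrite cumloss0 mulr0 expR0.
by rewrite sumr_const card_ord.
Qed.

Hypothesis m_gt0 : (0 < m)%N.

Lemma potential_gt0 t : 0 < potential t.
Proof.
rewrite /potential (bigD1 (Ordinal m_gt0)) //= ltr_pwDl ?expR_gt0 //.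
by apply: sumr_ge0 => i _; exact: expR_ge0.
Qed.

Lemma ewa_weight_ge0 t i : 0 <= ewa_weight t i.
Proof. by rewrite divr_ge0 ?expR_ge0 // ltW // potential_gt0. Qed.

Lemma sum_ewa_weight t : \sum_i ewa_weight t i = 1.
Proof. by rewrite -mulr_suml divff // lt0r_neq0 // potential_gt0. Qed.

Variable G : R.
Hypotheses (G_gt0 : 0 < G) (eta_gt0 : 0 < eta).

(* The potential ratio is the [e^(-eta g)]-moment of the current weights. *)
Lemma potentialS t : (forall i, `|g t.+1 i| <= G) ->
  potential t.+1 <= potential t *
    expR (- eta * \sum_i ewa_weight t.+1 i * g t.+1 i + (eta * G) ^+ 2 / 2).
Proof.
move=> gG.
have -> : potential t.+1 =
    potential t * \sum_i ewa_weight t.+1 i * expR (- eta * g t.+1 i).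
  rewrite mulr_sumr /potential; apply: eq_bigr => i _.
  rewrite cumlossS /ewa_weight /= mulrA mulrCA divff ?lt0r_neq0 ?potential_gt0 //.
  by rewrite mulr1 -expRD mulrDr.
rewrite ler_wpM2l ?(ltW (potential_gt0 t)) // mulr_sumr.
under [in leRHS]eq_bigr do rewrite mulrCA.
apply: hoeffding_lemma; rewrite ?mulr_gt0 //.
- exact: ewa_weight_ge0.
- exact: sum_ewa_weight.
- by move=> i; rewrite normrM normrN (gtr0_norm eta_gt0) ler_pM2l.
Qed.

Lemma potential_le T : (forall t i, (1 <= t <= T)%N -> `|g t i| <= G) ->
  potential T <= m%:R *
    expR (- eta * \sum_(1 <= t < T.+1) \sum_i ewa_weight t i * g t i
          + T%:R * ((eta * G) ^+ 2 / 2)).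
Proof.
elim: T => [_|T IH gG].
  by rewrite big_geq // mulr0 mul0r addr0 expR0 mulr1 potential0.
apply: (le_trans (potentialS (fun i => gG T.+1 i (leqnn _)))).
have gG' t i : (1 <= t <= T)%N -> `|g t i| <= G.
  by case/andP=> t1 tT; apply: gG; rewrite t1 leqW.
apply: (le_trans (ler_wpM2r (expR_ge0 _) (IH gG'))).
rewrite -mulrA -expRD (big_nat_recr T.+1) //= -natr1.
by rewrite ler_pM2l ?ltr0n // ler_expR; lra.
Qed.

Lemma ewa_regret T (u : 'I_m -> R) :
  (forall i, 0 <= u i) -> \sum_i u i = 1 ->
  (forall t i, (1 <= t <= T)%N -> `|g t i| <= G) ->
  \sum_(1 <= t < T.+1) \sum_i (ewa_weight t i - u i) * g t i
    <= (ln m%:R + T%:R * ((eta * G) ^+ 2 / 2)) / eta.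
Proof.
move=> u0 u1 gG; rewrite ler_pdivlMr // mulrC.
set A := \sum_(1 <= t < T.+1) \sum_i ewa_weight t i * g t i.
set B := \sum_(1 <= t < T.+1) \sum_i u i * g t i.
have -> : \sum_(1 <= t < T.+1) \sum_i (ewa_weight t i - u i) * g t i = A - B.
  rewrite /A /B -sumrB; apply: eq_bigr => t _; rewrite -sumrB.
  by apply: eq_bigr => i _; rewrite mulrBl.
have [j _ j_min] := @arg_minP _ _ _ (Ordinal m_gt0) xpredT (cumloss T) isT.
have Bj : cumloss T j <= B.
  have -> : B = \sum_i u i * cumloss T i.
    by rewrite /B exchange_big /=; apply: eq_bigr => i _; rewrite mulr_sumr.
  rewrite -[leLHS]mul1r -u1 mulr_suml; apply: ler_sum => i _.
  by rewrite ler_wpM2l //; exact: j_min.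
(* The best expert's term alone lower-bounds the potential. *)
have : expR (- eta * B) <= potential T.
  apply: le_trans (_ : expR (- eta * cumloss T j) <= _).
    by rewrite ler_expR !mulNr lerN2 ler_wpM2l // ltW.
  rewrite /potential (bigD1 j) //= lerDl; apply: sumr_ge0 => i _; exact: expR_ge0.
move/le_trans/(_ (potential_le gG)).
rewrite -ler_ln ?posrE ?mulr_gt0 ?expR_gt0 ?ltr0n // lnM ?posrE ?expR_gt0 ?ltr0n //.
by rewrite !expRK -/A; lra.
Qed.

End ExponentialWeights.
Arguments cumloss {R m}.
Arguments ewa_weight {R m}.

Lemma tuned_rate (R : realType) (a T G : R) : 0 < a -> 0 < T -> 0 < G ->
  let eta := Num.sqrt (2 * a / T) / G in
  (a + T * ((eta * G) ^+ 2 / 2)) / eta = Num.sqrt (2 * T) * (G * Num.sqrt a).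
Proof.
move=> a0 T0 G0 eta; set s := Num.sqrt (2 * a / T).
have s0 : 0 < s by rewrite sqrtr_gt0 divr_gt0 // mulr_gt0.
have s2 : s ^+ 2 = 2 * a / T by rewrite sqr_sqrtr // ltW // divr_gt0 // mulr_gt0.
have aE : a = s ^+ 2 * T / 2 by rewrite s2; field; rewrite lt0r_neq0.
rewrite [RHS]mulrCA -sqrtrM ?mulr_ge0 ?ltW //.
have -> : 2 * T * a = (s * T) ^+ 2 by rewrite exprMn s2; field; rewrite lt0r_neq0.
rewrite sqrtr_sqr ger0_norm ?mulr_ge0 ?ltW // /eta -/s aE.
by field; rewrite !lt0r_neq0.
Qed.

Lemma ewa_regret_tuned (R : realType) (m T : nat) (g : nat -> 'I_m -> R) (G : R)
    (u : 'I_m -> R) :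
  (0 < m)%N -> (0 < T)%N -> 0 < G ->
  (forall i, 0 <= u i) -> \sum_i u i = 1 ->
  (forall t i, (1 <= t <= T)%N -> `|g t i| <= G) ->
  \sum_(1 <= t < T.+1)
      \sum_i (ewa_weight g (Num.sqrt (2 * ln m%:R / T%:R) / G) t i - u i) * g t i
    <= Num.sqrt (2 * T%:R) * (G * Num.sqrt (ln m%:R)).
Proof.
move=> m_gt0 T_gt0 G_gt0 u0 u1 gG.
set eta := Num.sqrt _ / G.
have [m1|m_gt1] := leqP m 1.
  have {m_gt0 m1} m1 : m = 1%N by apply/eqP; rewrite eqn_leq m1.
  subst m; rewrite ln1 sqrtr0 !mulr0 big1 // => t _; rewrite big_ord1.
  have := sum_ewa_weight g eta isT t; rewrite big_ord1 => ->.
  by move: u1; rewrite big_ord1 => ->; rewrite subrr mul0r.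
have lnm_gt0 : 0 < ln (m%:R : R) by rewrite ln_gt0 // ltr1n.
have T0 : 0 < T%:R :> R by rewrite ltr0n.
have eta_gt0 : 0 < eta by rewrite divr_gt0 // sqrtr_gt0 divr_gt0 // mulr_gt0.
rewrite -(tuned_rate lnm_gt0 T0 G_gt0).
exact: ewa_regret.
Qed.

Section Blocks.
Variables (R : realType) (K : nat) (N : 'I_K -> nat).

Lemma sum_blocks (F : 'I_(dimN N) -> R) :
  \sum_j F j = \sum_k \sum_(i < N k) F (idx i).
Proof.
rewrite sig_big_dep /= (reindex (@tagnat.rank K N)) /=; last first.
  by exists (@tagnat.sig K N) => x _; [exact: tagnat.rankK | exact: tagnat.sigK].
by apply: eq_bigr => -[k i] _ /=; rewrite tagnat.rankE.
Qed.

Lemma eg_weights_idx (eta : 'I_K -> R) (L : 'rV[R]_(dimN N)) k (i : 'I_(N k)) :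
  eg_weights eta L ord0 (idx i) =
  expR (- eta k * L ord0 (idx i)) / \sum_(i' < N k) expR (- eta k * L ord0 (idx i')).
Proof.
rewrite /eg_weights mxE /idx.
by have := tagnat.Rank1K i; move: (tagnat.sig1 _) => k' k'E; subst k'.
Qed.

Variables (eta : 'I_K -> R) (l : nat -> 'rV[R]_(dimN N) -> R).

Definition block_grad (k : 'I_K) (s : nat) (i : 'I_(N k)) : R :=
  partial (l s) (eg_output eta l s) (idx i).
Arguments block_grad : clear implicits.

Lemma eg_output_idx t k (i : 'I_(N k)) :
  eg_output eta l t ord0 (idx i) = ewa_weight (block_grad k) (eta k) t i.
Proof.
have cum_gradE s (i' : 'I_(N k)) :
    cum_grad eta l s ord0 (idx i') = cumloss (block_grad k) s i'.
  elim: s => [|s IH]; first by rewrite cumloss0 mxE.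
  by rewrite /= mxE IH cumlossS mxE.
rewrite /eg_output eg_weights_idx /ewa_weight /potential cum_gradE.
by congr (_ / _); apply: eq_bigr => i' _; rewrite cum_gradE.
Qed.

Hypothesis N_gt0 : forall k, (0 < N k)%N.

Lemma eg_output_simplex t : in_simplex_prod (eg_output eta l t).
Proof.
move=> k; split=> [i|].
- by rewrite eg_output_idx ewa_weight_ge0.
- by under eq_bigr do rewrite eg_output_idx; exact: sum_ewa_weight.
Qed.

Lemma eg_linear_regret_blocks T (u : 'rV[R]_(dimN N)) :
  \sum_(1 <= t < T.+1) \sum_j (eg_output eta l t ord0 j - u ord0 j) *
                            partial (l t) (eg_output eta l t) j =
  \sum_k \sum_(1 <= t < T.+1) \sum_(i < N k)
      (ewa_weight (block_grad k) (eta k) t i - u ord0 (idx i)) * block_grad k t i.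
Proof.
under eq_bigr do rewrite sum_blocks.
rewrite exchange_big /=; apply: eq_bigr => k _; apply: eq_bigr => t _.
by apply: eq_bigr => i _; rewrite eg_output_idx.
Qed.

End Blocks.

Theorem theorem1 (R : realType) (K : nat) (N : 'I_K -> nat) (T : nat)
  (l : nat -> 'rV[R]_(dimN N) -> R) (G : 'I_K -> R) :
  (1 <= K)%N ->
  (forall k, 1 <= N k)%N ->
  (1 <= T)%N ->
  (forall t x, (1 <= t)%N -> in_simplex_prod x -> differentiable (l t) x) ->
  (forall t x y (lam : R), (1 <= t)%N -> in_simplex_prod x -> in_simplex_prod y ->
     0 <= lam <= 1 ->
     l t (lam *: x + (1 - lam) *: y) <= lam * l t x + (1 - lam) * l t y) ->
  (forall k, 0 < G k) ->
  (forall t x k (i : 'I_(N k)), (1 <= t <= T)%N -> in_simplex_prod x ->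
     `|partial (l t) x (idx i)| <= G k) ->
  let eta := fun k => Num.sqrt (2 * ln (N k)%:R / T%:R) / G k in
  forall u, in_simplex_prod u ->
    \sum_(1 <= t < T.+1) l t (eg_output eta l t) - \sum_(1 <= t < T.+1) l t u
      <= Num.sqrt (2 * T%:R) * \sum_(k < K) G k * Num.sqrt (ln (N k)%:R).
Proof.
move=> _ N_gt0 T_gt0 l_diff l_conv G_gt0 grad_bounded eta u u_simplex.
have out_simplex := eg_output_simplex eta l N_gt0.
rewrite -sumrB; apply: le_trans (_ : _ <= \sum_(1 <= t < T.+1) \sum_j
    (eg_output eta l t ord0 j - u ord0 j) * partial (l t) (eg_output eta l t) j) _.
  rewrite !big_nat; apply: ler_sum => t /andP[t_gt0 _].
  by apply: convex_partial_le => [|lam]; [exact: l_diff | exact: l_conv].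
rewrite eg_linear_regret_blocks mulr_sumr; apply: ler_sum => k _.
have [u_ge0 u_sum1] := u_simplex k.
apply: ewa_regret_tuned => // t i tT; exact: grad_bounded.
Qed.
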